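(* For every integer $m\ge2$, $$S_m^2<S_{m+1}S_{m-1}<\Big(1+\frac{1}{m(m-1)}\Big)S_m^2.$$
   Context: $(S_n)_{n\ge0}$ is the integer sequence defined by $S_0=1$, $S_1=4$ and $(n+1)^2S_{n+1}=4(3n^2+3n+1)S_n-32n^2S_{n-1}$ for $n\ge1$; equivalently $S_n=\sum_{k=0}^n\binom nk\binom{2k}k\binom{2n-2k}{n-k}$. *)

From mathcomp Require Import all_boot all_order all_algebra.
Set Implicit Arguments. Unset Strict Implicit. Unset Printing Implicit Defensive.

Definition S (n : nat) : nat :=
  \sum_(0 <= k < n.+1) 'C(n, k) * 'C(2 * k, k) * 'C(2 * n - 2 * k, n - k).

From mathcomp Require Import all_boot all_order all_algebra.
From mathcomp Require Import zify ring lra.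
Import Order.TTheory GRing.Theory Num.Theory.

(** Creative telescoping with a Zeilberger certificate gives the recurrence
   (n+1)^2 S_{n+1} + 32 n^2 S_{n-1} = 4 (3n^2 + 3n + 1) S_n, so the ratio
   r_n = S_n / S_{n-1} satisfies r_{n+1} = f_n(r_n) for a map f_n increasing
   in r_n.  Both inequalities compare consecutive ratios:
   r_m < r_{m+1} < (1 + 1/(m(m-1))) r_m.  Monotonicity of f_n propagates the
   bounds 8 - 8/n - 20/n^3 <= r_n <= 8 - 8/n (from n = 8 and n = 5), and on
   that range r_{m+1} - r_m and (1 + 1/(m(m-1))) r_m - r_{m+1} have the signs
   of quadratics in r_m that are controlled by their values at the endpoints.
   Small indices are computed. *)

Set Implicit Arguments.
Unset Strict Implicit.
Unset Printing Implicit Defensive.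

Definition summand (n k : nat) : nat :=
  'C(n, k) * 'C(2 * k, k) * 'C(2 * n - 2 * k, n - k).

Lemma summand_small n k : n < k -> summand n k = 0.
Proof. by move=> ltnk; rewrite /summand bin_small. Qed.

Lemma summand_addn k d : summand (k + d) k = 'C(k + d, k) * 'C(2 * k, k) * 'C(2 * d, d).
Proof. by rewrite /summand mulnDr !addKn. Qed.

Lemma mul_central_binS n : n.+1 * 'C(2 * n.+1, n.+1) = 2 * (2 * n + 1) * 'C(2 * n, n).
Proof.
apply/eqP; rewrite -(eqn_pmul2l (ltn0Sn n)); apply/eqP.
have e1 := mul_bin_diag (2 * n.+1) n; have e2 := mul_bin_diag (2 * n).+1 n.
rewrite (_ : (2 * n.+1).-1 = (2 * n).+1) in e1; last by lia.
have sym : 'C((2 * n).+1, n.+1) = 'C((2 * n).+1, n).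
  by rewrite -bin_sub ?subSS; [congr 'C(_, _); lia | lia].
rewrite /= sym in e2.
move: ('C(2 * n.+1, n.+1)) ('C((2 * n).+1, n)) ('C(2 * n, n)) e1 e2 => x y z e1 e2.
nia.
Qed.

Lemma summand_succ n k : k <= n ->
  (n.+1 - k) ^ 2 * summand n.+1 k = 2 * n.+1 * (2 * (n - k) + 1) * summand n k.
Proof.
move=> /subnKC; set d := n - k => <-.
rewrite -addnS !summand_addn !addKn.
have e1 := mul_bin_down (k + d).+1 k; have e2 := mul_central_binS d.
rewrite /= -addnS addKn in e1.
move: ('C(k + d.+1, k)) ('C(k + d, k)) ('C(2 * d.+1, d.+1)) ('C(2 * d, d)) ('C(2 * k, k)) e1 e2 => a b c e x e1 e2.
rewrite (_ : d.+1 ^ 2 * (a * x * c) = (d.+1 * a) * (d.+1 * c) * x); last by ring.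
by rewrite -e1 e2; ring.
Qed.

Lemma summand_succ_succ n k : k <= n ->
  k.+1 ^ 2 * summand n.+1 k.+1 = 2 * n.+1 * (2 * k + 1) * summand n k.
Proof.
move=> /subnKC; set d := n - k => <-.
rewrite -addSn !summand_addn.
have e1 := mul_bin_diag (k + d).+1 k; have e2 := mul_central_binS k.
rewrite /= -addSn in e1.
move: ('C(k.+1 + d, k.+1)) ('C(k + d, k)) ('C(2 * k.+1, k.+1)) ('C(2 * k, k)) ('C(2 * d, d)) e1 e2 => a b c e y e1 e2.
rewrite (_ : k.+1 ^ 2 * (a * c * y) = (k.+1 * a) * (k.+1 * c) * y); last by ring.
by rewrite -e1 e2; ring.
Qed.

Lemma S_widen n p : n < p -> S n = \sum_(0 <= k < p) summand n k.
Proof.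
move=> np; rewrite [RHS](big_cat_nat (n := n.+1)) //= [X in _ + X]big1_seq ?addn0 //.
by move=> k /andP[_]; rewrite mem_index_iota => /andP[nk _]; apply: summand_small.
Qed.

Lemma S_gt0 n : 0 < S n.
Proof.
rewrite /S big_ltn // addn_gt0 bin0 muln0 mul1n subn0 bin0 mul1n subn0 bin_gt0.
by rewrite leq_pmull.
Qed.

Local Open Scope ring_scope.

Local Notation t n k := ((summand n k)%:R : rat).

Lemma summand_succ_ratio n k : (k <= n)%N ->
  t n.+1 k = 2 * n.+1%:R * (2 * (n%:R - k%:R) + 1) / (n.+1%:R - k%:R) ^+ 2 * t n k.
Proof.
move=> kn; have := summand_succ kn.
move: (summand n.+1 k) (summand n k) => a b /(congr1 (fun x => x%:R : rat)) /=.
rewrite natrM natrX !natrM natrD natrM !natrB ?(leqW kn) // => e.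
have k_le_n : k%:R <= n%:R :> rat by rewrite ler_nat.
apply: (@mulfI _ ((n.+1%:R - k%:R) ^+ 2)); first by rewrite expf_eq0 /=; lra.
by rewrite e; field; lra.
Qed.

Lemma summand_succ_succ_ratio n k : (k <= n)%N ->
  t n.+1 k.+1 = 2 * n.+1%:R * (2 * k%:R + 1) / k.+1%:R ^+ 2 * t n k.
Proof.
move=> kn; have := summand_succ_succ kn.
move: (summand n.+1 k.+1) (summand n k) => a b /(congr1 (fun x => x%:R : rat)) /=.
rewrite natrM natrX !natrM natrD natrM => e.
have k1_neq0 : k.+1%:R != 0 :> rat by rewrite pnatr_eq0.
apply: (@mulfI _ (k.+1%:R ^+ 2)); first by rewrite expf_neq0.
by rewrite e; field; have := ler0n rat k; lra.
Qed.

Definition zeil_op (n k : nat) : rat :=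
  n.+1%:R ^+ 2 * t n.+1 k - 4 * (3 * n%:R ^+ 2 + 3 * n%:R + 1) * t n k
  + 32 * n%:R ^+ 2 * t n.-1 k.

Definition zeil_cert (n k : nat) : rat :=
  t n.+1 k * k%:R ^+ 2 * (1 - n%:R - 2 * n%:R * (n%:R - k%:R))
  / ((n%:R + 1) * (2 * n%:R - 2 * k%:R + 1)).

Lemma zeil_op_telescope n k : (k <= n.+1)%N ->
  zeil_op n k = zeil_cert n k.+1 - zeil_cert n k.
Proof.
have n0 := ler0n rat n; rewrite /zeil_op /zeil_cert leq_eqVlt => /orP[/eqP-> | ].
  rewrite (summand_small (ltnSn n)) (summand_small (ltnSn n.+1)).
  rewrite [summand n.-1 _]summand_small; last by lia.
  by rewrite -!natr1; field; lra.
rewrite ltnS leq_eqVlt => /orP[/eqP-> | ].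
  rewrite summand_succ_ratio ?summand_succ_succ_ratio //.
  case: n n0 => [|n] n0; first by rewrite -!natr1; field.
  by rewrite (summand_small (ltnSn n)) -!natr1; field; lra.
case: n {n0} => // n; rewrite ltnS => kn.
have k0 := ler0n rat k; have k_le_n : k%:R <= n%:R :> rat by rewrite ler_nat.
rewrite summand_succ_ratio ?summand_succ_succ_ratio ?(leqW kn) //.
by rewrite summand_succ_ratio // -!natr1; field; lra.
Qed.

Lemma S_rec n :
  n.+1%:R ^+ 2 * (S n.+1)%:R + 32 * n%:R ^+ 2 * (S n.-1)%:R =
  4 * (3 * n%:R ^+ 2 + 3 * n%:R + 1) * (S n)%:R :> rat.
Proof.
have : \sum_(0 <= k < n.+2) zeil_op n k = 0.
  rewrite (eq_big_nat _ _ (F2 := fun k => zeil_cert n k.+1 - zeil_cert n k)).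
    by rewrite telescope_sumr // /zeil_cert summand_small // expr0n /= !(mul0r, mulr0) subrr.
  by move=> k /andP[_ kn]; apply: zeil_op_telescope.
rewrite /zeil_op 2!big_split /= sumrN -!mulr_sumr -!natr_sum.
by rewrite -!S_widen ?ltnS ?leqnSn ?(leq_trans (leq_pred n)) // => e; lra.
Qed.

Section RatioStep.
Variable R : realFieldType.
Implicit Types a b c l u m x y : R.

Lemma quadratic_lt0_between a b c l u x :
  0 <= a -> a * l ^+ 2 + b * l + c < 0 -> a * u ^+ 2 + b * u + c < 0 ->
  l <= x <= u -> a * x ^+ 2 + b * x + c < 0.
Proof.
move=> a0 ql qu /andP[lx xu]; have [->//|neq_xu] := eqVneq x u.
have ux : 0 < u - x by rewrite subr_gt0 lt_neqAle neq_xu.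
have lu : 0 < u - l by lra.
rewrite -(pmulr_rlt0 _ lu).
have -> : (u - l) * (a * x ^+ 2 + b * x + c) =
    (u - x) * (a * l ^+ 2 + b * l + c) + (x - l) * (a * u ^+ 2 + b * u + c)
    - a * (x - l) * (u - x) * (u - l) by ring.
have := mulr_ge0 (mulr_ge0 (mulr_ge0 a0 (eqbRL (subr_ge0 _ _) lx)) (ltW ux)) (ltW lu).
have := mulr_ge0_le0 (eqbRL (subr_ge0 _ _) lx) (ltW qu).
have := eqbRL (pmulr_rlt0 _ ux) ql.
lra.
Qed.

Lemma quadratic_gt0_right a b c l x :
  0 <= a -> 0 < a * l ^+ 2 + b * l + c -> 0 <= 2 * a * l + b -> l <= x ->
  0 < a * x ^+ 2 + b * x + c.
Proof.
move=> a0 ql dql lx.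
have -> : a * x ^+ 2 + b * x + c =
    (a * l ^+ 2 + b * l + c) + (2 * a * l + b) * (x - l) + a * (x - l) ^+ 2 by ring.
have := mulr_ge0 dql (eqbRL (subr_ge0 _ _) lx).
have := mulr_ge0 a0 (sqr_ge0 (x - l)).
lra.
Qed.

Lemma ler_mul_exprS c m k : c <= m -> 0 <= c -> c * m ^+ k <= m ^+ k.+1.
Proof. by move=> cm c0; rewrite exprS ler_wpM2r ?exprn_ge0 // (le_trans c0). Qed.

(* Supplies [c * m ^+ k <= m ^+ k.+1] for [k < n], which makes positivity of a
   polynomial with a dominant leading term linear in the monomials. *)
Ltac lra_with_powers cm n :=
  let rec add k := match k with
    | 0%N => idtac
    | ?k'.+1 => have := @ler_mul_exprS _ _ k' cm ltac:(lra); add k' end in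
  add n; rewrite ?expr0 ?expr1; lra.

Definition ratio_step m x : R :=
  (4 * (3 * m ^+ 2 + 3 * m + 1) - 32 * m ^+ 2 / x) / (m + 1) ^+ 2.
Definition ratio_lb m : R := 8 - 8 / m - 20 / m ^+ 3.
Definition ratio_ub m : R := 8 - 8 / m.

Lemma ratio_step_homo m x y : 0 <= m -> 0 < x -> x <= y ->
  ratio_step m x <= ratio_step m y.
Proof.
move=> m0 x0 xy; rewrite ler_pM2r ?invr_gt0 ?exprn_gt0 ?ltr_pwDr //.
rewrite lerD2l lerN2 ler_wpM2l ?mulr_ge0 ?sqr_ge0 //.
by rewrite lef_pV2 ?posrE // (lt_le_trans x0).
Qed.

Lemma ratio_lb_gt0 m : 2 <= m -> 0 < ratio_lb m.
Proof.
move=> m2; have -> : ratio_lb m = (8 * m ^+ 3 - 8 * m ^+ 2 - 20) / m ^+ 3.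
  by rewrite /ratio_lb; field; lra.
by rewrite divr_gt0 ?exprn_gt0; try lra; lra_with_powers m2 3%N.
Qed.

Lemma ratio_step_ub m : 1 < m -> ratio_step m (ratio_ub m) <= ratio_ub (m + 1).
Proof.
move=> m1; rewrite -subr_ge0.
have -> : ratio_ub (m + 1) - ratio_step m (ratio_ub m) = 4 / ((m - 1) * (m + 1) ^+ 2).
  by rewrite /ratio_ub /ratio_step; field; lra.
by rewrite divr_ge0 // mulr_ge0 ?sqr_ge0 // subr_ge0 ltW.
Qed.

Lemma ratio_step_lb m : 8 <= m -> ratio_lb (m + 1) <= ratio_step m (ratio_lb m).
Proof.
move=> m8; rewrite -subr_ge0.
have -> : ratio_step m (ratio_lb m) - ratio_lb (m + 1) =
    16 * (3 * m ^+ 3 - 22 * m ^+ 2 - 10 * m - 30) /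
    ((8 * m ^+ 3 - 8 * m ^+ 2 - 20) * (m + 1) ^+ 3).
  by rewrite /ratio_lb /ratio_step; field; lra_with_powers m8 3%N.
by rewrite divr_ge0 ?mulr_ge0 ?exprn_ge0; try lra; lra_with_powers m8 3%N.
Qed.

Lemma ratio_lt_step m x : 5 <= m -> ratio_lb m <= x <= ratio_ub m ->
  x < ratio_step m x.
Proof.
move=> m5 x_in; have x0 : 0 < x.
  by case/andP: x_in => lbx _; apply: lt_le_trans lbx; apply: ratio_lb_gt0; lra.
pose a := (m + 1) ^+ 2; pose b := - (4 * (3 * m ^+ 2 + 3 * m + 1)).
pose c := 32 * m ^+ 2.
have -> : ratio_step m x = x - (a * x ^+ 2 + b * x + c) / (a * x).
  by rewrite /ratio_step /a /b /c; field; lra.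
suff : (a * x ^+ 2 + b * x + c) / (a * x) < 0 by lra.
rewrite pmulr_llt0 ?invr_gt0 ?mulr_gt0 ?exprn_gt0; try lra.
apply: (quadratic_lt0_between _ _ _ x_in); first exact: sqr_ge0.
- have -> : a * ratio_lb m ^+ 2 + b * ratio_lb m + c =
      - (64 * m ^+ 6 + 48 * m ^+ 5 + 16 * m ^+ 4 - 400 * m ^+ 3
         - 720 * m ^+ 2 - 800 * m - 400) / m ^+ 6.
    by rewrite /ratio_lb /a /b /c; field; lra.
  by rewrite mulNr oppr_lt0 divr_gt0 ?exprn_gt0; try lra; lra_with_powers m5 6%N.
- have -> : a * ratio_ub m ^+ 2 + b * ratio_ub m + c =
      - (32 * (2 * m ^+ 2 - m - 2)) / m ^+ 2.
    by rewrite /ratio_ub /a /b /c; field; lra.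
  by rewrite mulNr oppr_lt0 divr_gt0 ?exprn_gt0; try lra; lra_with_powers m5 2%N.
Qed.

Lemma ratio_step_lt m x : 5 <= m -> ratio_lb m <= x ->
  ratio_step m x < (1 + 1 / (m * (m - 1))) * x.
Proof.
move=> m5 lbx; have x0 : 0 < x by apply: lt_le_trans lbx; apply: ratio_lb_gt0; lra.
pose a := (1 + 1 / (m * (m - 1))) * (m + 1) ^+ 2.
pose b := - (4 * (3 * m ^+ 2 + 3 * m + 1)); pose c := 32 * m ^+ 2.
have -> : ratio_step m x =
    (1 + 1 / (m * (m - 1))) * x - (a * x ^+ 2 + b * x + c) / ((m + 1) ^+ 2 * x).
  by rewrite /ratio_step /a /b /c; field; lra.
rewrite ltrBlDr ltrDl divr_gt0 ?mulr_gt0 ?exprn_gt0 //; try lra.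
apply: (quadratic_gt0_right _ _ _ lbx).
- by rewrite /a mulr_ge0 ?sqr_ge0 // addr_ge0 // divr_ge0 ?mulr_ge0; lra.
- have -> : a * ratio_lb m ^+ 2 + b * ratio_lb m + c =
      (16 * m ^+ 7 - 96 * m ^+ 6 + 96 * m ^+ 5 + 64 * m ^+ 4 + 400 * m ^+ 3
       + 320 * m ^+ 2 + 400 * m + 400) / (m ^+ 7 * (m - 1)).
    by rewrite /ratio_lb /a /b /c; field; lra.
  (* [16 m^7 - 96 m^6] is not dominated term by term. *)
  have top_terms_ge0 : 0 <= m ^+ 5 * ((m - 5) * (m - 1)) by rewrite !mulr_ge0 ?exprn_ge0; lra.
  by rewrite divr_gt0 ?mulr_gt0 ?exprn_gt0; try lra; lra_with_powers m5 7%N.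
- have -> : 2 * a * ratio_lb m + b =
      (4 * m ^+ 7 - 8 * m ^+ 5 - 20 * m ^+ 4 - 40 * m ^+ 3 - 16 * m ^+ 2
       - 40 * m - 40) / (m ^+ 4 * (m - 1)).
    by rewrite /ratio_lb /a /b; field; lra.
  by rewrite divr_ge0 ?mulr_ge0 ?exprn_ge0; try lra; lra_with_powers m5 7%N.
Qed.

Lemma sqr_lt_mul_ratio a b c : 0 < a -> 0 < b -> (a ^+ 2 < c * b) = (a / b < c / a).
Proof.
move=> a0 b0; rewrite -[RHS](ltr_pM2r (mulr_gt0 a0 b0)).
by congr (_ < _); field; lra.
Qed.

Lemma mul_lt_sqr_ratio a b c k : 0 < a -> 0 < b ->
  (c * b < k * a ^+ 2) = (c / a < k * (a / b)).
Proof.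
move=> a0 b0; rewrite -[RHS](ltr_pM2r (mulr_gt0 a0 b0)).
by congr (_ < _); field; lra.
Qed.

End RatioStep.


Definition ratio (n : nat) : rat := (S n)%:R / (S n.-1)%:R.

Lemma ratio_gt0 n : 0 < ratio n.
Proof. by rewrite divr_gt0 // ltr0n S_gt0. Qed.

Lemma ratio_succ n : ratio n.+1 = ratio_step n%:R (ratio n).
Proof.
have := S_rec n; rewrite -natr1 /ratio /ratio_step /= => rec.
have Sn0 : (S n)%:R != 0 :> rat by rewrite pnatr_eq0 -lt0n S_gt0.
have Sp0 : (S n.-1)%:R != 0 :> rat by rewrite pnatr_eq0 -lt0n S_gt0.
have n1 : n%:R + 1 != 0 :> rat by have := ler0n rat n; lra.
have -> : (S n.+1)%:R = (4 * (3 * n%:R ^+ 2 + 3 * n%:R + 1) * (S n)%:R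
    - 32 * n%:R ^+ 2 * (S n.-1)%:R) / (n%:R + 1) ^+ 2 :> rat.
  by rewrite -rec; field.
by field; rewrite n1 Sn0 Sp0.
Qed.

Lemma ratio1 : ratio 1 = 4. Proof. by rewrite /ratio /S unlock. Qed.
Lemma ratio2 : ratio 2 = 5. Proof. by rewrite ratio_succ ratio1 /ratio_step; field. Qed.
Lemma ratio3 : ratio 3 = 28 / 5. Proof. by rewrite ratio_succ ratio2 /ratio_step; field. Qed.
Lemma ratio4 : ratio 4 = 169 / 28. Proof. by rewrite ratio_succ ratio3 /ratio_step; field. Qed.
Lemma ratio5 : ratio 5 = 1076 / 169. Proof. by rewrite ratio_succ ratio4 /ratio_step; field. Qed.
Lemma ratio6 : ratio 6 = 1781 / 269. Proof. by rewrite ratio_succ ratio5 /ratio_step; field. Qed.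
Lemma ratio7 : ratio 7 = 12140 / 1781. Proof. by rewrite ratio_succ ratio6 /ratio_step; field. Qed.

Lemma ratio_le_ub n : (5 <= n)%N -> ratio n <= ratio_ub n%:R.
Proof.
move=> /subnK <-; elim: (n - 5)%N => [|k IH].
  by rewrite add0n ratio5 /ratio_ub; lra.
have k5 : 5 <= (k + 5)%:R :> rat by rewrite (ler_nat _ 5) leq_addl.
rewrite addSn ratio_succ -natr1.
apply: le_trans (ratio_step_homo (ler0n _ _) (ratio_gt0 _) IH) _.
by apply: ratio_step_ub; lra.
Qed.

Lemma ratio_ge_lb n : (5 <= n)%N -> ratio_lb n%:R <= ratio n.
Proof.
move=> n5; have [n_lt8 | /subnK <-] := ltnP n 8.
  have : [|| n == 5, n == 6 | n == 7] by lia.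
  by case/or3P=> /eqP->; rewrite ?ratio5 ?ratio6 ?ratio7 /ratio_lb; lra.
elim: (n - 8)%N => [|k IH].
  (* A rounded lower bound on [ratio 7] avoids the large numerator of [ratio 8]. *)
  have r7 : 852 / 125 <= ratio 7 by rewrite ratio7; lra.
  rewrite add0n ratio_succ.
  apply: le_trans (ratio_step_homo (ler0n _ 7) _ r7); last by lra.
  have -> : ratio_step 7%:R (852 / 125) = 23747 / 3408 :> rat by rewrite /ratio_step; field.
  by rewrite /ratio_lb; lra.
have k8 : 8 <= (k + 8)%:R :> rat by rewrite (ler_nat _ 8) leq_addl.
rewrite addSn ratio_succ -natr1.
apply: le_trans (ratio_step_lb k8) (ratio_step_homo (ler0n _ _) _ IH).
by apply: ratio_lb_gt0; apply: le_trans k8.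
Qed.

Theorem theorem4p1 (m : nat) (hm : (2 <= m)%N) :
  ((S m)%:Q ^+ 2 < (S m.+1)%:Q * (S m.-1)%:Q) /\
  ((S m.+1)%:Q * (S m.-1)%:Q < (1 + 1 / (m%:Q * (m%:Q - 1))) * (S m)%:Q ^+ 2).
Proof.
have S0 k : 0 < (S k)%:R :> rat by rewrite ltr0n S_gt0.
rewrite -!pmulrn sqr_lt_mul_ratio ?mul_lt_sqr_ratio ?S0 //.
rewrite -/(ratio m) -[(S m.+1)%:R / _]/(ratio m.+1).
case: (ltnP m 5) => [m_lt5 | m_ge5].
  (* [lra] only inverts numerals. *)
  have -> : m%:R - 1 = m.-1%:R :> rat by rewrite -subn1 natrB ?(leq_trans _ hm).
  have : [|| m == 2, m == 3 | m == 4] by lia.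
  case/or3P=> /eqP-> /=.
  - by rewrite ratio2 ratio3; split; lra.
  - by rewrite ratio3 ratio4; split; lra.
  - by rewrite ratio4 ratio5; split; lra.
have m5 : 5 <= m%:R :> rat by rewrite (ler_nat _ 5).
rewrite ratio_succ; split.
- by apply: ratio_lt_step; rewrite ?ratio_ge_lb ?ratio_le_ub.
- exact: ratio_step_lt (ratio_ge_lb m_ge5).
Qed.
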